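(* Let $\kappa$ be a maximal clique of the IDNC graph $\mathcal G$ chosen for transmission at time $t$, with all quantities without time index denoting their values at time $t$. For a receiver $i\in\mathcal T(\kappa)$, the expected primary degree of a vertex of receiver $i$ at time $t+1$ is \[ \mathbb E\big[\Delta_{i}^{(t+1)}\big]=\mathbb E\big[\Delta_i^{(t)}\big]+\alpha_i, \] and for a receiver $i\notin\mathcal T(\kappa)$ it is \[ \mathbb E\big[\Delta_{i}^{(t+1)}\big]=\mathbb E\big[\Delta_i^{(t)}\big]+\beta_i, \] where \[ \alpha_i=\sum_{k\ne i} q_i\xi_k-\sum_{k\in\mathcal T_\rho(\kappa),k\ne i}\Phi_{ik}(q_i)+\sum_{k\in\mathcal T_\sigma(\kappa),k\ne i}\Lambda_{ik}(q_i),\qquad \beta_i=-\sum_{k\in\mathcal T_\rho(\kappa),k\ne i}\Phi_{ik}(0)+\sum_{k\in\mathcal T_\sigma(\kappa),k\ne i}\Lambda_{ik}(0), \] \[ \Phi_{ik}(x)=\frac{q_k}{N}\Big(1+\frac{(\varrho_k-\psi_k+1)(\varrho_i+x)}{N-1}\Big),\quad \Lambda_{ik}(x)=\frac{q_k\psi_k(\varrho_i+x)}{N(N-1)},\quad \xi_k=\frac{\psi_k\varrho_k}{N(N-1)}, \] with the sum over $k\ne i$ ranging over $k\in\{1,\dots,M\}$.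
   Context: A sender holds a frame $\mathcal N$ of $N\ge2$ packets and serves receivers $\mathcal M=\{1,\dots,M\}$. For each receiver $i$ there are sets $\mathcal H_i\subseteq\mathcal N$ (Has set), $\mathcal L_i=\mathcal N\setminus\mathcal H_i$ (Lacks set) and $\mathcal W_i\subseteq\mathcal L_i$ (Wants set), with cardinalities $\varrho_i=|\mathcal H_i|$, $\psi_i=|\mathcal W_i|$. Receiver $i$ has packet success probability $q_i\in[0,1]$. The IDNC graph $\mathcal G$ has a primary vertex $v_{ij}$ for each $i\in\mathcal M$, $j\in\mathcal W_i$, and a secondary vertex $v_{ij}$ for each $i\in\mathcal M$, $j\in\mathcal L_i\setminus\mathcal W_i$; two distinct vertices $v_{ij},v_{kl}$ are adjacent iff (C1) $j=l$, or (C2) $j\in\mathcal H_k$ and $l\in\mathcal H_i$. The primary graph is the subgraph induced by primary vertices; primary degree means degree in it. For a maximal clique $\kappa$ of $\mathcal G$, $\mathcal T_\rho(\kappa)$ (resp. $\mathcal T_\sigma(\kappa)$) is the set of receivers having a primary (resp. secondary) vertex in $\kappa$, and $\mathcal T(\kappa)=\mathcal T_\rho(\kappa)\cup\mathcal T_\sigma(\kappa)$. Transmission model: when $\kappa$ is transmitted at time $t$, each $k\in\mathcal T(\kappa)$ receives it with probability $q_k$, independently; let $X_k\in\{0,1\}$ be the reception indicator. At time $t+1$ the cardinalities become $\varrho_k'=\varrho_k+X_k$ for $k\in\mathcal T(\kappa)$, $\psi_k'=\psi_k-X_k$ for $k\in\mathcal T_\rho(\kappa)$, and are otherwise unchanged.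 Expected degrees are computed ignoring set contents (sets treated as uniformly random given their cardinalities): for cardinality vectors $\boldsymbol\varrho,\boldsymbol\psi$, the expected primary degree of a vertex of receiver $i$ is $D_i(\boldsymbol\varrho,\boldsymbol\psi)=\sum_{k\ne i}\frac{\psi_k}{N}\big(1+\frac{\varrho_k\varrho_i}{N-1}\big)$. Thus $\mathbb E[\Delta_i^{(t)}]=D_i(\boldsymbol\varrho,\boldsymbol\psi)$ and $\mathbb E[\Delta_i^{(t+1)}]=\mathbb E_X\big[D_i(\boldsymbol\varrho',\boldsymbol\psi')\big]$, the expectation over the independent receptions. *)

From mathcomp Require Import all_boot all_order all_algebra.
Set Implicit Arguments. Unset Strict Implicit. Unset Printing Implicit Defensive.
Import Order.TTheory GRing.Theory Num.Theory.
Local Open Scope ring_scope.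

(* Receivers are 'I_M (receiver i+1 of the paper is i), packets are 'I_N.
   H i = Has set, W i = Wants set, Lacks set = ~: H i.
   A vertex v_ij is the pair (i, j) with j in the Lacks set of i. *)

Section IDNC.
Variables (M N : nat) (H W : 'I_M -> {set 'I_N}).

Definition vertex (v : 'I_M * 'I_N) : bool := v.2 \notin H v.1.
Definition primary (v : 'I_M * 'I_N) : bool := vertex v && (v.2 \in W v.1).
Definition secondary (v : 'I_M * 'I_N) : bool := vertex v && (v.2 \notin W v.1).

Definition adjacent (v w : 'I_M * 'I_N) : bool :=
  (v != w) && ((v.2 == w.2) || ((v.2 \in H w.1) && (w.2 \in H v.1))).

Definition is_clique (K : {set 'I_M * 'I_N}) : bool :=
  [forall v in K, vertex v] &&
  [forall v in K, forall w in K, (v != w) ==> adjacent v w].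

Definition is_maximal_clique (K : {set 'I_M * 'I_N}) : bool :=
  is_clique K && [forall K' : {set 'I_M * 'I_N}, (K \proper K') ==> ~~ is_clique K'].

Definition T_rho (K : {set 'I_M * 'I_N}) : {set 'I_M} :=
  [set i | [exists j, ((i, j) \in K) && primary (i, j)]].
Definition T_sigma (K : {set 'I_M * 'I_N}) : {set 'I_M} :=
  [set i | [exists j, ((i, j) \in K) && secondary (i, j)]].
Definition T_all (K : {set 'I_M * 'I_N}) : {set 'I_M} := T_rho K :|: T_sigma K.

Variable R : realFieldType.

Definition rho_of (i : 'I_M) : R := (#|H i|)%:R.
Definition psi_of (i : 'I_M) : R := (#|W i|)%:R.

(* expected primary degree for cardinality vectors rho, psi *)
Definition Dexp (rho psi : 'I_M -> R) (i : 'I_M) : R :=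
  \sum_(k < M | k != i) psi k / N%:R * (1 + rho k * rho i / (N%:R - 1)).

Variable q : 'I_M -> R.

Definition pr (k : 'I_M) (b : bool) : R := if b then q k else 1 - q k.

(* cardinalities at time t+1 given transmission of K and reception vector X *)
Definition rho_next (K : {set 'I_M * 'I_N}) (X : {ffun 'I_M -> bool}) (k : 'I_M) : R :=
  rho_of k + (if (k \in T_all K) && X k then 1 else 0).
Definition psi_next (K : {set 'I_M * 'I_N}) (X : {ffun 'I_M -> bool}) (k : 'I_M) : R :=
  psi_of k - (if (k \in T_rho K) && X k then 1 else 0).

Definition Edeg_now (i : 'I_M) : R := Dexp rho_of psi_of i.

(* E[Delta_i^(t+1)]: expectation over independent receptions X_k ~ Bernoulli(q_k)
   (the X_k for k outside T(K) do not affect the update) *)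
Definition Edeg_next (K : {set 'I_M * 'I_N}) (i : 'I_M) : R :=
  \sum_(X : {ffun 'I_M -> bool}) (\prod_(k < M) pr k (X k)) *
     Dexp (rho_next K X) (psi_next K X) i.

Definition Phi (i k : 'I_M) (x : R) : R :=
  q k / N%:R * (1 + (rho_of k - psi_of k + 1) * (rho_of i + x) / (N%:R - 1)).
Definition Lambda (i k : 'I_M) (x : R) : R :=
  q k * psi_of k * (rho_of i + x) / (N%:R * (N%:R - 1)).
Definition xi (k : 'I_M) : R := psi_of k * rho_of k / (N%:R * (N%:R - 1)).

Definition alpha (K : {set 'I_M * 'I_N}) (i : 'I_M) : R :=
  \sum_(k < M | k != i) q i * xi k
  - \sum_(k in T_rho K | k != i) Phi i k (q i)
  + \sum_(k in T_sigma K | k != i) Lambda i k (q i).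

Definition beta (K : {set 'I_M * 'I_N}) (i : 'I_M) : R :=
  - \sum_(k in T_rho K | k != i) Phi i k 0
  + \sum_(k in T_sigma K | k != i) Lambda i k 0.

End IDNC.

From mathcomp Require Import all_boot all_order all_algebra.
From mathcomp Require Import ring.
Set Implicit Arguments. Unset Strict Implicit. Unset Printing Implicit Defensive.
Import Order.TTheory GRing.Theory Num.Theory.
Local Open Scope ring_scope.

(* By linearity of expectation it suffices to treat each summand k <> i of the
   expected degree separately.  Such a summand depends on the receptions only
   through X_k and X_i, which are independent, so its expectation is a sum over
   the four outcomes of (X_k, X_i).  Within a clique a receiver is either
   primary or secondary but never both, and in each of the resulting cases the
   increment of the summand is a rational identity in q_k, q_i and the
   cardinalities. *)

Section IndependentPair.
Variables (R : realFieldType) (M : nat) (p : 'I_M -> bool -> R).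
Hypothesis p_sum1 : forall j, p j true + p j false = 1.

Lemma expect_indep_pair (k i : 'I_M) (g : bool -> bool -> R) : k != i ->
  \sum_(X : {ffun 'I_M -> bool}) (\prod_(j < M) p j (X j)) * g (X k) (X i) =
  \sum_(a : bool) \sum_(b : bool) p k a * p i b * g a b.
Proof.
move=> nki.
have gE (X : {ffun 'I_M -> bool}) : g (X k) (X i) =
    \sum_(a : bool) \sum_(b : bool) ((X k == a)%:R * (X i == b)%:R) * g a b.
  by rewrite !big_bool /=; case: (X k); case: (X i);
    rewrite /= ?mulr1 ?mulr0 ?mul0r ?mul1r ?addr0 ?add0r.
under eq_bigr => X _ do rewrite gE big_distrr /=.
rewrite exchange_big /=; apply: eq_bigr => a _.
under eq_bigr => X _ do rewrite big_distrr /=.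
rewrite exchange_big /=; apply: eq_bigr => b _.
under eq_bigr => X _ do rewrite mulrA.
rewrite -big_distrl /=; congr (_ * _).
pose h j x := p j x * (if j == k then (x == a)%:R else 1) *
                (if j == i then (x == b)%:R else 1).
transitivity (\sum_(X : {ffun 'I_M -> bool}) \prod_(j < M) h j (X j)).
  apply: eq_bigr => X _; rewrite /h !big_split /=.
  rewrite -(big_mkcond (fun j => j == k)) -(big_mkcond (fun j => j == i)).
  by rewrite !big_pred1_eq mulrA.
rewrite -bigA_distr_bigA /=.
transitivity (\prod_(j < M) ((if j == k then p k a else 1) *
                              (if j == i then p i b else 1))).
  apply: eq_bigr => j _; rewrite big_bool /h {h} /=.
  have [->|njk] := eqVneq j k; first rewrite (negbTE nki).
    by case: a; rewrite /= ?mulr1 ?mulr0 ?addr0 ?add0r.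
  have [->|nji] := eqVneq j i.
    by case: b; rewrite /= ?mulr1 ?mul1r ?mulr0 ?addr0 ?add0r.
  by rewrite !mulr1 p_sum1.
by rewrite big_split /= -!big_mkcond !big_pred1_eq.
Qed.

End IndependentPair.

(* Two vertices (k, j), (k, l) of one receiver are adjacent only if j = l, since
   j would otherwise have to lie in the Has set of k. *)
Lemma clique_T_rho_notin_T_sigma (M N : nat) (H W : 'I_M -> {set 'I_N})
    (K : {set 'I_M * 'I_N}) (k : 'I_M) :
  is_clique H K -> k \in T_rho H W K -> k \notin T_sigma H W K.
Proof.
case/andP=> _ /forallP adjK; rewrite !inE => /existsP [j /andP [jK]].
rewrite /primary /vertex /= => /andP [jNH jW].
apply/existsP => -[l /andP [lK]]; rewrite /secondary /= => /andP [_ lNW].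
have njl : (k, j) != (k, l) by apply: contraNneq lNW => -[<-].
move: (adjK (k, j)); rewrite jK => /forallP /(_ (k, l)); rewrite lK njl /=.
rewrite /adjacent njl /= (negbTE jNH) orbF => /eqP ejl.
by rewrite ejl eqxx in njl.
Qed.

Section ExpectedDegree.
Variables (R : realFieldType) (M N : nat) (H W : 'I_M -> {set 'I_N}).
Variables (q : 'I_M -> R) (K : {set 'I_M * 'I_N}).
Hypotheses (N_ge2 : (2 <= N)%N) (K_clique : is_clique H K).

Definition rx_prob (i : 'I_M) : R := if i \in T_all H W K then q i else 0.

Definition degree_increment (i k : 'I_M) (x : R) : R :=
  x * xi H W R k
  - (if k \in T_rho H W K then Phi H W q i k x else 0)
  + (if k \in T_sigma H W K then Lambda H W q i k x else 0).

Lemma pr_sum1 (j : 'I_M) : pr q j true + pr q j false = 1.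
Proof. by rewrite /pr addrC subrK. Qed.

Lemma expect_degree_term (i k : 'I_M) : k != i ->
  \sum_(X : {ffun 'I_M -> bool}) (\prod_(j < M) pr q j (X j)) *
    (psi_next H W R K X k / N%:R *
       (1 + rho_next H W R K X k * rho_next H W R K X i / (N%:R - 1)))
  = psi_of W R k / N%:R * (1 + rho_of H R k * rho_of H R i / (N%:R - 1))
    + degree_increment i k (rx_prob i).
Proof.
move=> nki; rewrite /psi_next /rho_next.
rewrite (expect_indep_pair pr_sum1 (fun a b =>
   (psi_of W R k - (if (k \in T_rho H W K) && a then 1 else 0)) / N%:R *
   (1 + (rho_of H R k + (if (k \in T_all H W K) && a then 1 else 0)) *
        (rho_of H R i + (if (i \in T_all H W K) && b then 1 else 0)) /
        (N%:R - 1))) nki).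
have N0 : (N%:R : R) != 0 by rewrite pnatr_eq0 -lt0n (leq_trans _ N_ge2).
have N1 : (N%:R - 1 : R) != 0 by rewrite subr_eq0 pnatr_eq1 neq_ltn N_ge2 orbT.
rewrite !big_bool /= /degree_increment /rx_prob /T_all !in_setU.
rewrite /Phi /Lambda /xi /pr.
case kr: (k \in T_rho H W K); case ks: (k \in T_sigma H W K) => /=.
- by rewrite (negbTE (clique_T_rho_notin_T_sigma K_clique kr)) in ks.
all: case: (i \in T_rho H W K); case: (i \in T_sigma H W K) => /=.
all: rewrite ?subr0 ?addr0 ?mul0r ?add0r; field.
all: by rewrite ?N0 ?N1.
Qed.

Lemma Edeg_next_increment (i : 'I_M) :
  Edeg_next H W q K i =
  Edeg_now H W R i + \sum_(k < M | k != i) degree_increment i k (rx_prob i).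
Proof.
rewrite /Edeg_next /Edeg_now /Dexp.
under eq_bigr => X _ do rewrite big_distrr /=.
rewrite exchange_big /= -big_split /=.
by apply: eq_bigr => k; apply: expect_degree_term.
Qed.

Lemma sum_degree_increment (i : 'I_M) (x : R) :
  \sum_(k < M | k != i) degree_increment i k x =
  \sum_(k < M | k != i) x * xi H W R k
  - \sum_(k in T_rho H W K | k != i) Phi H W q i k x
  + \sum_(k in T_sigma H W K | k != i) Lambda H W q i k x.
Proof. by rewrite !big_split /= sumrN -!big_mkcondl. Qed.

End ExpectedDegree.

Theorem theorem5 (R : realFieldType) (M N : nat) (H W : 'I_M -> {set 'I_N})
    (q : 'I_M -> R) (K : {set 'I_M * 'I_N}) :
  (2 <= N)%N ->
  (forall i, W i \subset ~: H i) ->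
  (forall i, 0 <= q i <= 1) ->
  is_maximal_clique H K ->
  (forall i, i \in T_all H W K ->
     Edeg_next H W q K i = Edeg_now H W R i + alpha H W q K i) /\
  (forall i, i \notin T_all H W K ->
     Edeg_next H W q K i = Edeg_now H W R i + beta H W q K i).
Proof.
(* The identity is algebraic: of the hypotheses only (2 <= N) and the clique
   property of K are used. *)
move=> N_ge2 _ _ /andP [K_clique _].
split=> i Ti; rewrite Edeg_next_increment // sum_degree_increment /rx_prob.
  by rewrite Ti.
rewrite (negbTE Ti) big1 ?add0r // => k _.
exact: mul0r.
Qed.
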